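(* Let $1\le t\le n$ and let $M_t$ be the real matrix with rows and columns indexed by the nonempty subsets of $[n]$ of size at most $t$, ordered by nondecreasing size, with $M_t[a,b]=2^{|a\cap b|}$. For $0\le i\le t-1$ let $M_t^{(i)}$ denote the Schur complement $M_t/M_i$ of the upper-left principal submatrix $M_i$ (indexed by the sets of size at most $i$), with $M_t^{(0)}=M_t$; its rows and columns are indexed by the subsets $a\subseteq[n]$ with $i<|a|\le t$. Then for all such $a,b$, $$M_t^{(i)}[a,b]=f^{(i+1)}(|a\cap b|)+u^{(i)}(|a|,|b|),$$ where $f^{(i)}(x)=\sum_{k=i}^x\binom xk=2^x-\sum_{k=0}^{i-1}\binom xk$, $u^{(i)}(w,w')=\binom{w-1}{i}\binom{w'-1}{i}/\alpha_i$, and $\alpha_i=\sum_{k=0}^i\binom nk$.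
   Context: For a block matrix $\begin{pmatrix}A&B\\ C&D'\end{pmatrix}$ with $A$ invertible, the Schur complement of $A$ is $D'-CA^{-1}B$. (For $1\le i$, the submatrix $M_i$ is invertible.) *)

From HB Require Import structures.
From mathcomp Require Import all_boot all_order all_algebra.
Set Implicit Arguments. Unset Strict Implicit. Unset Printing Implicit Defensive.
Import Order.TTheory GRing.Theory Num.Theory.
Local Open Scope ring_scope.

Section Defs.
Variables (R : fieldType) (n : nat).

Definition Mentry (a b : {set 'I_n}) : R := (2%:R) ^+ #|a :&: b|.

Definition idx (i : nat) : {set {set 'I_n}} := [set c : {set 'I_n} | (0 < #|c| <= i)%N].

Definition Mmat (i : nat) : 'M[R]_#|idx i| :=
  \matrix_(p, q) Mentry (enum_val p) (enum_val q).

(* Entry (a,b) of the Schur complement M_t / M_i, i.e. of D' - C A^{-1} B,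
   with A = M_i; a, b range over subsets with i < |a|, |b| <= t. *)
Definition schur (i : nat) (a b : {set 'I_n}) : R :=
  Mentry a b -
  \sum_(p < #|idx i|) \sum_(q < #|idx i|)
     Mentry a (enum_val p) * invmx (Mmat i) p q * Mentry (enum_val q) b.

Definition fpoly (i x : nat) : R := \sum_(i <= k < x.+1) ('C(x, k))%:R.

Definition alpha (i : nat) : R := \sum_(0 <= k < i.+1) ('C(n, k))%:R.

Definition upoly (i w w' : nat) : R :=
  ('C(w.-1, i))%:R * ('C(w'.-1, i))%:R / alpha i.

End Defs.

From HB Require Import structures.
From mathcomp Require Import all_boot all_order all_algebra.
From mathcomp Require Import ring.
Import Order.TTheory GRing.Theory Num.Theory.
Set Implicit Arguments. Unset Strict Implicit. Unset Printing Implicit Defensive.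
Local Open Scope ring_scope.

(* Since 2^|a :&: b| counts the common subsets of a and b, M_t is the Gram
   matrix of the indicators zeta a = [_ \subset a] for the standard inner
   product on functions of subsets of [n].  Hence M_t / M_i is the Gram matrix
   of the projections of the zeta a orthogonally to V = span {zeta c | 0 < |c| <= i}.
   By Moebius inversion, the functions supported on sets of size at most i are
   exactly V + R w, where w d = (-1)^|d| [|d| <= i] is orthogonal to V.  So the
   projection of zeta a is its restriction to sets of size > i, which yields
   f^(i+1)(|a :&: b|), plus <zeta a, w> / <w, w> * w, which yields u^(i)(|a|, |b|)
   because <zeta a, w> = (-1)^i binom(|a|-1, i) and <w, w> = alpha_i. *)

Lemma sum_sign_binS (R : comPzRingType) m i :
  \sum_(0 <= k < i.+1) (-1) ^+ k * 'C(m.+1, k)%:R = (-1) ^+ i * 'C(m, i)%:R :> R.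
Proof.
elim: i => [|i IHi]; first by rewrite big_nat1 !bin0 expr0.
by rewrite big_nat_recr //= IHi binS natrD exprS; ring.
Qed.

Section SubsetSums.
Variables (R : comPzRingType) (T : finType).
Implicit Types (s c d e : {set T}) (G : nat -> R).

Lemma sum_subset_card s G m : (#|s| < m)%N ->
  \sum_(c : {set T} | c \subset s) G #|c| = \sum_(0 <= k < m) 'C(#|s|, k)%:R * G k.
Proof.
move=> ltsm.
have -> : \sum_(0 <= k < m) 'C(#|s|, k)%:R * G k
        = \sum_(0 <= k < m) \sum_(c : {set T} | (c \subset s) && (#|c| == k)) G k.
  apply: eq_bigr => k _; rewrite sumr_const -cards_draws mulr_natl.
  by congr (_ *+ _); apply: eq_card => c; rewrite inE.
rewrite (exchange_big_dep (fun c => c \subset s)) /=; last by move=> k c _ /andP[].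
apply: eq_bigr => c cs; rewrite (eq_bigl (fun k => k == #|c|)) => [|k].
  by rewrite big_nat1_eq (leq_ltn_trans (subset_leq_card cs) ltsm).
by rewrite cs eq_sym.
Qed.

Lemma sum_small_subsets s G i :
  \sum_(c : {set T} | (c \subset s) && (#|c| <= i)%N) G #|c|
    = \sum_(0 <= k < i.+1) 'C(#|s|, k)%:R * G k.
Proof.
have lt_s_si : (#|s| < (#|s| + i).+1)%N by rewrite ltnS leq_addr.
rewrite big_mkcondr (sum_subset_card (fun k => if (k <= i)%N then G k else 0) lt_s_si).
rewrite (big_nat_widen _ _ _ _ _ (_ : i.+1 <= (#|s| + i).+1)%N) ?ltnS ?leq_addl //.
by rewrite [RHS]big_mkcond; apply: eq_bigr => k _; rewrite ltnS; case: leqP; rewrite ?mulr0.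
Qed.

Lemma sum_large_subsets s G i :
  \sum_(c : {set T} | (c \subset s) && (i < #|c|)%N) G #|c|
    = \sum_(i.+1 <= k < #|s|.+1) 'C(#|s|, k)%:R * G k.
Proof.
rewrite big_mkcondr (sum_subset_card (fun k => if (i < k)%N then G k else 0) (ltnSn _)).
rewrite [RHS](@big_nat_widenl _ _ _ _ 0) // [RHS]big_mkcond /=.
by apply: eq_bigr => k _; case: ltnP; rewrite ?mulr0.
Qed.

Lemma sum_sign_small_subsets s i : (0 < #|s|)%N ->
  \sum_(c : {set T} | (c \subset s) && (#|c| <= i)%N) (-1) ^+ #|c|
    = (-1) ^+ i * 'C(#|s|.-1, i)%:R :> R.
Proof.
rewrite (sum_small_subsets s (fun k => (-1) ^+ k)); case: #|s| => // m _ /=.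
by rewrite -sum_sign_binS; apply: eq_bigr => k _; rewrite mulrC.
Qed.

Lemma sum_sign_subsets s :
  \sum_(c : {set T} | c \subset s) (-1) ^+ #|c| = (s == set0)%:R :> R.
Proof.
have [->|s_neq0] := eqVneq s set0.
  by rewrite (eq_bigl _ _ (fun c => subset0 c)) big_pred1_eq cards0.
rewrite (eq_bigl (fun c => (c \subset s) && (#|c| <= #|s|)%N)) => [|c].
  by rewrite sum_sign_small_subsets ?card_gt0 // bin_small ?mulr0 // prednK ?card_gt0.
by case: (boolP (c \subset s)) => //= /subset_leq_card ->.
Qed.

Lemma sum_sign_interval d e :
  \sum_(c : {set T} | (d \subset c) && (c \subset e)) (-1) ^+ #|c|
    = (d == e)%:R * (-1) ^+ #|e| :> R.
Proof.
have [de|nde] := boolP (d \subset e); last first.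
  rewrite big_pred0 => [|c]; last by apply: contraNF nde => /andP[/subset_trans]; apply.
  by case: eqP nde => [->|]; rewrite ?subxx ?mul0r.
have dUD c : d \subset c -> d :|: (c :\: d) = c.
  by move=> dc; rewrite setDE setUIr setUCr setIT; apply/setUidPr.
rewrite (reindex_onto (fun c => d :|: c) (fun c => c :\: d)) /=; last first.
  by move=> c /andP[/dUD].
rewrite (eq_bigl (fun c => c \subset e :\: d)) => [|c]; last first.
  by rewrite subsetUl subUset de setDUl setDv set0U subsetD (sameP eqP setDidPl).
rewrite (eq_bigr (fun c => (-1) ^+ #|d| * (-1) ^+ #|c|)) => [|c]; last first.
  rewrite subsetD => /andP[_ dc].
  by rewrite cardsU setIC (disjoint_setI0 dc) cards0 subn0 exprD.
rewrite -mulr_sumr sum_sign_subsets setD_eq0.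
have [<-|] := eqVneq d e; first by rewrite subxx mulrC.
by rewrite eqEsubset de /= => /negPf ->; rewrite mulr0 mul0r.
Qed.

End SubsetSums.

Section MobiusInversion.
Variables (R : comPzRingType) (T : finType).
Implicit Types (a c d : {set T}) (u y : {set T} -> R).

(* zeta a d is the zeta function of the Boolean lattice at (d, a); its
   inverse, the Moebius function, is (-1)^(|e| - |c|) at (c, e). *)
Definition zeta a d : R := (d \subset a)%:R.

Definition mobius_coef u c : R :=
  (-1) ^+ #|c| * \sum_(e : {set T} | c \subset e) (-1) ^+ #|e| * u e.

Lemma zeta_expansion u d : \sum_c mobius_coef u c * zeta c d = u d.
Proof.
transitivity (\sum_(c : {set T}) \sum_(e : {set T})
    ((if (d \subset c) && (c \subset e) then (-1) ^+ #|c| else 0) * ((-1) ^+ #|e| * u e))).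
  apply: eq_bigr => c _; rewrite /mobius_coef /zeta big_mkcond mulr_sumr mulr_suml.
  apply: eq_bigr => e _.
  by case: (d \subset c); case: (c \subset e); rewrite /= ?mul0r ?mulr0 ?mulr1.
rewrite exchange_big /=; under eq_bigr do rewrite -mulr_suml -big_mkcond sum_sign_interval.
rewrite (bigD1 d) //= eqxx mul1r mulrA -expr2 sqrr_sign mul1r big1 ?addr0 // => e.
by rewrite eq_sym => /negPf ->; rewrite !mul0r.
Qed.

Lemma mobius_coef_expansion u y c :
  (forall d, u d = \sum_a y a * zeta a d) -> mobius_coef u c = y c.
Proof.
move=> u_exp; transitivity ((-1) ^+ #|c| * \sum_(a : {set T}) \sum_(e : {set T})
    ((if (c \subset e) && (e \subset a) then (-1) ^+ #|e| else 0) * y a)).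
  congr (_ * _); under eq_bigr do rewrite u_exp.
  rewrite [RHS]exchange_big [LHS]big_mkcond; apply: eq_bigr => e _.
  case: (c \subset e) => /=; last by rewrite big1 // => a _; rewrite mul0r.
  rewrite mulr_sumr; apply: eq_bigr => a _; rewrite /zeta.
  by case: (e \subset a); rewrite ?mulr1 ?mulr0 ?mul0r.
under eq_bigr do rewrite -mulr_suml -big_mkcond sum_sign_interval.
rewrite (bigD1 c) //= eqxx mul1r big1 ?addr0 => [|a]; first by rewrite mulrA -expr2 sqrr_sign mul1r.
by rewrite eq_sym => /negPf ->; rewrite !mul0r.
Qed.

Lemma zeta_free (I : finType) (f : I -> {set T}) (y : I -> R) :
  injective f -> (forall d, \sum_p y p * zeta (f p) d = 0) -> forall p, y p = 0.
Proof.
move=> f_inj y_rel p.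
pose Y c := \sum_(q | f q == c) y q.
have Y_exp d : 0 = \sum_c Y c * zeta c d.
  transitivity (\sum_q y q * zeta (f q) d); first by rewrite y_rel.
  rewrite (partition_big f xpredT) //=; apply: eq_bigr => c _.
  by rewrite mulr_suml; apply: eq_bigr => q /eqP <-.
have -> : y p = Y (f p) by rewrite /Y (eq_bigl _ _ (fun q => inj_eq f_inj q p)) big_pred1_eq.
by rewrite -(mobius_coef_expansion _ Y_exp) /mobius_coef big1 ?mulr0 // => e _; rewrite mulr0.
Qed.

End MobiusInversion.

Arguments zeta {R T} a d.

Section FunDot.
Variables (R : comPzRingType) (T : finType).
Implicit Types u w : T -> R.

Definition fdot u w : R := \sum_x u x * w x.

Lemma fdotC u w : fdot u w = fdot w u.
Proof. by apply: eq_bigr => x _; rewrite mulrC. Qed.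

Lemma fdot_suml (I : finType) (y : I -> R) (v : I -> T -> R) w :
  fdot (fun x => \sum_p y p * v p x) w = \sum_p y p * fdot (v p) w.
Proof.
rewrite /fdot; under eq_bigr do rewrite mulr_suml.
rewrite exchange_big; apply: eq_bigr => p _; rewrite mulr_sumr.
by apply: eq_bigr => x _; rewrite mulrA.
Qed.

Lemma fdotDl u u' w : fdot (fun x => u x + u' x) w = fdot u w + fdot u' w.
Proof. by rewrite -big_split; apply: eq_bigr => x _; rewrite mulrDl. Qed.

Lemma fdotBl u u' w :
  fdot (fun x => u x - u' x) w = fdot u w - fdot u' w.
Proof. by rewrite -sumrB; apply: eq_bigr => x _; rewrite mulrBl. Qed.

Lemma fdotZl k u w : fdot (fun x => k * u x) w = k * fdot u w.
Proof. by rewrite mulr_sumr; apply: eq_bigr => x _; rewrite mulrA. Qed.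

End FunDot.

Section GramMatrix.
Variables (T : finType) (m : nat).

Definition gram (R : comPzRingType) (v : 'I_m -> T -> R) : 'M[R]_m :=
  \matrix_(p, q) fdot (v p) (v q).

Lemma gram_schur (R : fieldType) (v : 'I_m -> T -> R) (u w r : T -> R) (y : 'I_m -> R) :
  gram v \in unitmx ->
  (forall x, u x = \sum_p y p * v p x + r x) ->
  (forall p, fdot r (v p) = 0) ->
  fdot u w - \sum_p \sum_q fdot u (v p) * invmx (gram v) p q * fdot (v q) w = fdot r w.
Proof.
move=> gram_unit u_dec r_orth.
have fdot_dec w' : fdot u w' = \sum_p y p * fdot (v p) w' + fdot r w'.
  rewrite -fdot_suml /fdot -big_split /=.
  by apply: eq_bigr => x _; rewrite u_dec mulrDl.
have row_u : \row_p fdot u (v p) = \row_p y p *m gram v.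
  by apply/rowP => p; rewrite !mxE fdot_dec r_orth addr0; apply: eq_bigr => q _; rewrite !mxE.
have -> : \sum_p \sum_q fdot u (v p) * invmx (gram v) p q * fdot (v q) w
          = (\row_p fdot u (v p) *m invmx (gram v) *m \col_q fdot (v q) w) 0 0.
  rewrite mxE exchange_big; apply: eq_bigr => q _; rewrite !mxE mulr_suml.
  by apply: eq_bigr => p _; rewrite !mxE.
rewrite row_u mulmxK // mxE fdot_dec.
under [X in _ - X]eq_bigr do rewrite !mxE.
by rewrite addrAC subrr add0r.
Qed.

Lemma gram_unitmx (R : realFieldType) (v : 'I_m -> T -> R) :
    (forall y : 'I_m -> R, (forall x, \sum_p y p * v p x = 0) -> forall p, y p = 0) ->
  gram v \in unitmx.
Proof.
move=> v_free; rewrite unitmxE unitfE; apply/det0P => -[c c_neq0 c_ker].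
have comb0 x : \sum_p c 0 p * v p x = 0.
  pose u x := \sum_p c 0 p * v p x.
  have u_orth q : fdot u (v q) = 0.
    have /rowP/(_ q) := c_ker; rewrite !mxE => <-.
    by rewrite fdot_suml; apply: eq_bigr => p _; rewrite mxE.
  have : fdot u u = 0 by rewrite /u fdot_suml big1 // => q _; rewrite fdotC u_orth mulr0.
  move/psumr_eq0P => /(_ (fun y _ => sqr_ge0 (u y)) x isT) /eqP.
  by rewrite mulf_eq0 orbb => /eqP.
by case/eqP: c_neq0; apply/rowP => p; rewrite mxE (v_free _ comb0).
Qed.

End GramMatrix.

Section SmallSets.
Variables (R : comPzRingType) (T : finType) (i : nat).
Implicit Types (a b d s : {set T}) (u : {set T} -> R).

Definition small_sign d : R := (#|d| <= i)%:R * (-1) ^+ #|d|.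

Definition zeta_large a d : R := ((d \subset a) && (i < #|d|)%N)%:R.

Lemma fdot_zeta_small_sign s : (0 < #|s|)%N ->
  fdot (zeta s) small_sign = (-1) ^+ i * 'C(#|s|.-1, i)%:R.
Proof.
move=> s_gt0; rewrite -sum_sign_small_subsets // big_mkcond; apply: eq_bigr => d _.
by rewrite /zeta /small_sign; case: (d \subset s); case: (#|d| <= i)%N; rewrite ?mul1r ?mul0r.
Qed.

Lemma fdot_small_sign : fdot small_sign small_sign = \sum_(0 <= k < i.+1) 'C(#|T|, k)%:R.
Proof.
rewrite -cardsT (eq_bigr (fun k => 'C(#|[set: T]|, k)%:R * 1)) => [|k _]; last by rewrite mulr1.
rewrite -(sum_small_subsets _ (fun=> 1)) big_mkcond; apply: eq_bigr => d _.
rewrite subsetT /small_sign; case: (#|d| <= i)%N; rewrite ?mul0r //.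
by rewrite !mul1r -expr2 sqrr_sign.
Qed.

Lemma fdot_zeta_large a b :
  fdot (zeta_large a) (zeta b) = \sum_(i.+1 <= k < #|a :&: b|.+1) 'C(#|a :&: b|, k)%:R.
Proof.
rewrite (eq_bigr (fun k => 'C(#|a :&: b|, k)%:R * 1)) => [|k _]; last by rewrite mulr1.
rewrite -(sum_large_subsets _ (fun=> 1)) big_mkcond; apply: eq_bigr => d _.
rewrite /zeta_large /zeta subsetI.
by case: (d \subset a); case: (d \subset b); case: (i < #|d|)%N; rewrite ?mulr1 ?mulr0 ?mul0r.
Qed.

Lemma fdot_small_sign_zeta_large a : fdot small_sign (zeta_large a) = 0.
Proof.
apply: big1 => d _; rewrite /small_sign /zeta_large.
by case: leqP; rewrite ?andbF ?mulr0 ?mul0r.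
Qed.

Lemma small_support_expansion u :
  (forall d, (i < #|d|)%N -> u d = 0) -> fdot small_sign u = 0 ->
  forall d, u d = \sum_(c : {set T} | (0 < #|c| <= i)%N) mobius_coef u c * zeta c d.
Proof.
move=> u_small u_orth d; rewrite -[LHS]zeta_expansion [RHS]big_mkcond /=.
apply: eq_bigr => c _; case: ifP => // /negbT; rewrite negb_and -leqNgt -ltnNge.
case/orP => [|lt_i_c]; first rewrite leqn0 cards_eq0 => /eqP ->.
  rewrite /mobius_coef cards0 expr0 mul1r.
  suff -> : \sum_(e : {set T} | set0 \subset e) (-1) ^+ #|e| * u e = 0 by rewrite mul0r.
  rewrite -[RHS]u_orth; apply: eq_big => [e|e _]; first by rewrite sub0set.
  by rewrite /small_sign; case: leqP => [_|/u_small->]; rewrite ?mul1r ?mulr0.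
rewrite /mobius_coef big1 ?mulr0 ?mul0r // => e ce.
by rewrite u_small ?mulr0 // (leq_trans lt_i_c (subset_leq_card ce)).
Qed.

End SmallSets.

Arguments small_sign {R T} i d.
Arguments zeta_large {R T} i a d.

Section SchurComplement.
Variables (R : realFieldType) (n i : nat).
Implicit Types a b c d : {set 'I_n}.

Local Notation w := (small_sign i : {set 'I_n} -> R).

Lemma Mentry_fdot a b : Mentry R a b = fdot (zeta a) (zeta b).
Proof.
rewrite /Mentry -natrX -card_powerset -sum1_card natr_sum big_mkcond /=.
apply: eq_bigr => d _; rewrite powersetE subsetI /zeta.
by case: (d \subset a); case: (d \subset b); rewrite ?mulr1 ?mulr0.
Qed.

Lemma Mmat_gram : Mmat R n i = gram (fun p : 'I_#|idx n i| => zeta (enum_val p)).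
Proof. by apply/matrixP => p q; rewrite !mxE Mentry_fdot. Qed.

Lemma Mmat_unit : Mmat R n i \in unitmx.
Proof.
by rewrite Mmat_gram; apply: gram_unitmx => y; apply: zeta_free; apply: enum_val_inj.
Qed.

Lemma fdot_small_sign_alpha : fdot w w = alpha R n i.
Proof. by rewrite fdot_small_sign card_ord. Qed.

Lemma alpha_neq0 : alpha R n i != 0.
Proof. by rewrite /alpha big_nat_recl // bin0 -natr_sum -natrD pnatr_eq0 add1n. Qed.

Definition zeta_perp a d : R :=
  zeta_large i a d + fdot (zeta a) w / alpha R n i * w d.

Lemma fdot_zeta_perp a u :
  fdot (zeta_perp a) u = fdot (zeta_large i a) u + fdot (zeta a) w / alpha R n i * fdot w u.
Proof. by rewrite fdotDl fdotZl. Qed.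

Lemma fdot_zeta_perp_small_sign a :
  fdot (zeta_perp a) w = fdot (zeta a) w.
Proof.
rewrite fdot_zeta_perp fdotC fdot_small_sign_zeta_large fdot_small_sign_alpha.
by rewrite add0r divfK ?alpha_neq0.
Qed.

Lemma fdot_zeta_perp_idx a c : c \in idx n i -> fdot (zeta_perp a) (zeta c) = 0.
Proof.
rewrite inE => /andP[c_gt0 c_le_i].
have lt_ac_i : (#|a :&: c| < i.+1)%N.
  by rewrite ltnS (leq_trans _ c_le_i) // subset_leq_card // subsetIr.
rewrite fdot_zeta_perp fdot_zeta_large big_geq // add0r (fdotC _ (zeta c)).
by rewrite (fdot_zeta_small_sign _ _ c_gt0) bin_small ?mulr0 // prednK.
Qed.

Lemma zeta_perp_span a d :
  zeta a d - zeta_perp a d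
  = \sum_(c in idx n i) mobius_coef (fun e => zeta a e - zeta_perp a e) c * zeta c d.
Proof.
rewrite (eq_bigl (fun c => (0 < #|c| <= i)%N)) => [|c]; last by rewrite inE.
apply: small_support_expansion => [e lt_i_e|].
  rewrite /zeta_perp /small_sign /zeta_large lt_i_e andbT leqNgt lt_i_e.
  by rewrite !mul0r mulr0 addr0 subrr.
by rewrite fdotC fdotBl fdot_zeta_perp_small_sign subrr.
Qed.

Lemma schur_fdot a b : schur R i a b = fdot (zeta_perp a) (zeta b).
Proof.
rewrite /schur Mmat_gram Mentry_fdot.
under eq_bigr do under eq_bigr do rewrite !Mentry_fdot.
pose g e := zeta a e - zeta_perp a e.
have zeta_a_dec d :
    zeta a d = \sum_(p < #|idx n i|) mobius_coef g (enum_val p) * zeta (enum_val p) d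
               + zeta_perp a d.
  rewrite -(big_enum_val (fun c => mobius_coef g c * zeta c d)) /g.
  by rewrite -zeta_perp_span subrK.
have := Mmat_unit; rewrite Mmat_gram => gram_unit.
exact: gram_schur gram_unit zeta_a_dec (fun p => fdot_zeta_perp_idx a (enum_valP p)).
Qed.

Lemma fdot_zeta_perp_zeta a b : (0 < #|a|)%N -> (0 < #|b|)%N ->
  fdot (zeta_perp a) (zeta b) = fpoly R i.+1 #|a :&: b| + upoly R n i #|a| #|b|.
Proof.
move=> a_gt0 b_gt0; rewrite fdot_zeta_perp fdot_zeta_large (fdotC w).
rewrite (fdot_zeta_small_sign _ _ a_gt0) (fdot_zeta_small_sign _ _ b_gt0); congr (_ + _).
by rewrite /upoly mulrAC mulrACA -expr2 sqrr_sign mul1r.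
Qed.

End SchurComplement.

Theorem lemma9 (R : realFieldType) (n t i : nat)
  (ht1 : (1 <= t)%N) (htn : (t <= n)%N) (hit : (i <= t.-1)%N)
  (a b : {set 'I_n})
  (ha : (i < #|a| <= t)%N) (hb : (i < #|b| <= t)%N) :
  schur R i a b = fpoly R i.+1 #|a :&: b| + upoly R n i #|a| #|b|.
Proof.
have card_pos (s : {set 'I_n}) : (i < #|s| <= t)%N -> (0 < #|s|)%N.
  by case/andP=> /(leq_ltn_trans (leq0n i)).
by rewrite schur_fdot fdot_zeta_perp_zeta ?card_pos.
Qed.
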